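(* Let $L$ be a principal element lattice and $n\ge1$. The following statements are equivalent: (1) Every proper element of $L$ is a strongly quasi $n$-absorbing element of $L$. (2) For all $a,b\in L$, $a^n=a^nb$ or $a^{n-1}b=a^nb$. (3) For all $a_1,a_2,\dots,a_{n+1}\in L$, $(a_1\wedge a_2\wedge\cdots\wedge a_n)^n\le a_1a_2\cdots a_{n+1}$ or $(a_1\wedge a_2\wedge\cdots\wedge a_n)^{n-1}a_{n+1}\le a_1a_2\cdots a_{n+1}$.
   Context: A multiplicative lattice is a complete lattice $L$ with least element $0$ and compact greatest element $1$, equipped with a commutative, associative product that distributes over arbitrary joins and has $1$ as multiplicative identity. For $x,y\in L$, $(x:y)=\bigvee\{z: zy\le x\}$. An element $e$ is principal if $a\wedge be=((a:e)\wedge b)e$ and $(ae\vee b):e=(b:e)\vee a$ for all $a,b\in L$; a principal element lattice is a multiplicative lattice in which every element is principal. $a^0=1$. A proper element $q$ ($q<1$) is strongly quasi $n$-absorbing if whenever $a,b\in L$ (not necessarily compact) satisfy $a^nb\le q$, then $a^n\le q$ or $a^{n-1}b\le q$. *)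

From Stdlib Require Import List Arith.

Record MultLattice := {
  carrier :> Type;
  le : carrier -> carrier -> Prop;
  le_refl : forall x, le x x;
  le_trans : forall x y z, le x y -> le y z -> le x z;
  le_antisym : forall x y, le x y -> le y x -> x = y;
  sup : (carrier -> Prop) -> carrier;
  sup_ub : forall (S : carrier -> Prop) x, S x -> le x (sup S);
  sup_least : forall (S : carrier -> Prop) y, (forall x, S x -> le x y) -> le (sup S) y;
  mul : carrier -> carrier -> carrier;
  mulC : forall x y, mul x y = mul y x;
  mulA : forall x y z, mul x (mul y z) = mul (mul x y) z;
  one : carrier;
  one_top : forall x, le x one;
  mul1 : forall x, mul one x = x;
  mul_sup : forall x (S : carrier -> Prop),
      mul x (sup S) = sup (fun y => exists s, S s /\ y = mul x s);
  one_compact : forall (S : carrier -> Prop), le one (sup S) ->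
      exists l : list carrier, (forall x, In x l -> S x) /\
                               le one (sup (fun x => In x l))
}.

Section Ops.
Variable L : MultLattice.

Definition zero : L := sup L (fun _ => False).
Definition join (a b : L) : L := sup L (fun z => z = a \/ z = b).
Definition meet (a b : L) : L := sup L (fun z => le L z a /\ le L z b).
Definition residual (x y : L) : L := sup L (fun z => le L (mul L z y) x).

Fixpoint pow (a : L) (k : nat) : L :=
  match k with O => one L | S k' => mul L a (pow a k') end.

Definition principal (e : L) : Prop :=
  forall a b : L,
    meet a (mul L b e) = mul L (meet (residual a e) b) e /\
    residual (join (mul L a e) b) e = join (residual b e) a.

Definition principal_element_lattice : Prop := forall e : L, principal e.

Definition proper (q : L) : Prop := le L q (one L) /\ q <> one L.

Definition strongly_quasi_n_absorbing (n : nat) (q : L) : Prop :=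
  proper q /\
  forall a b : L, le L (mul L (pow a n) b) q ->
    le L (pow a n) q \/ le L (mul L (pow a (n - 1)) b) q.

(* meet of a 0, ..., a (k-1)  (a_1 /\ ... /\ a_k in 1-based indexing) *)
Definition bigmeet (a : nat -> L) (k : nat) : L :=
  sup L (fun z => forall i, i < k -> le L z (a i)).

Fixpoint bigprod (a : nat -> L) (k : nat) : L :=
  match k with O => one L | S k' => mul L (bigprod a k') (a k') end.

End Ops.

(* Since [a^n b <= a^n] and [a^n b <= a^(n-1) b] hold in every multiplicative
   lattice, (2) says that the element [a^n b] is always attained by one of its
   two upper bounds; applying (1) to [q := a^n b] gives exactly that, and
   conversely (2) makes every [q] strongly quasi n-absorbing.  For (3), put
   [c := a_1 /\ ... /\ a_n]: then [c^n a_(n+1) <= a_1 ... a_(n+1)], so (2) for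
   [c, a_(n+1)] gives (3); conversely (3) for the family [a, ..., a, b] is (2). *)
From Stdlib Require Import List Arith Lia Classical.

Section MultLatticeFacts.
Variable L : MultLattice.

Lemma mul_monor (a x y : L) : le L x y -> le L (mul L a x) (mul L a y).
Proof.
  intro Hxy.
  assert (Hjoin : join L x y = y).
  { apply le_antisym.
    - apply sup_least. intros z [-> | ->]; [exact Hxy | apply le_refl].
    - apply sup_ub. now right. }
  rewrite <- Hjoin. unfold join. rewrite mul_sup.
  apply sup_ub. exists x. split; [now left | reflexivity].
Qed.

Lemma mul_mono (a b x y : L) :
  le L a b -> le L x y -> le L (mul L a x) (mul L b y).
Proof.
  intros Hab Hxy. apply le_trans with (mul L a y); [now apply mul_monor |].
  rewrite (mulC L a y), (mulC L b y). now apply mul_monor.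
Qed.

Lemma mul_le_l (a b : L) : le L (mul L a b) a.
Proof.
  apply le_trans with (mul L a (one L)); [apply mul_monor, one_top |].
  rewrite mulC, mul1. apply le_refl.
Qed.

Lemma pow_mul_le_predpow_mul (a b : L) (n : nat) :
  le L (mul L (pow L a n) b) (mul L (pow L a (n - 1)) b).
Proof.
  destruct n as [|k]; [apply le_refl |].
  simpl. rewrite Nat.sub_0_r, <- mulA, mulC. apply mul_le_l.
Qed.

Lemma bigmeet_le (a : nat -> L) (k i : nat) : i < k -> le L (bigmeet L a k) (a i).
Proof. intro Hi. apply sup_least. intros z Hz. now apply Hz. Qed.

Lemma pow_le_bigprod (c : L) (a : nat -> L) (k : nat) :
  (forall i, i < k -> le L c (a i)) -> le L (pow L c k) (bigprod L a k).
Proof.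
  induction k as [|k IHk]; intro Hc; simpl; [apply le_refl |].
  rewrite mulC. apply mul_mono; [apply IHk; intros i Hi |]; apply Hc; lia.
Qed.

Definition padded (a b : L) (n : nat) : nat -> L :=
  fun i => if i <? n then a else b.

Lemma padded_lt (a b : L) (n i : nat) : i < n -> padded a b n i = a.
Proof. intro Hi. unfold padded. now rewrite (proj2 (Nat.ltb_lt i n) Hi). Qed.

Lemma bigmeet_padded (a b : L) (n : nat) : 1 <= n -> bigmeet L (padded a b n) n = a.
Proof.
  intro Hn. apply le_antisym.
  - rewrite <- (padded_lt a b n 0) at 2 by lia. now apply bigmeet_le.
  - apply sup_ub. intros i Hi. rewrite padded_lt by exact Hi. apply le_refl.
Qed.

Lemma bigprod_padded (a b : L) (n : nat) :
  bigprod L (padded a b n) (S n) = mul L (pow L a n) b.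
Proof.
  assert (Hpow : forall k, k <= n -> bigprod L (padded a b n) k = pow L a k).
  { induction k as [|k IHk]; intro Hk; simpl; [reflexivity |].
    rewrite IHk, padded_lt by lia. apply mulC. }
  simpl. rewrite Hpow by lia. unfold padded. now rewrite Nat.ltb_irrefl.
Qed.

Definition pow_mul_dichotomy (n : nat) : Prop :=
  forall a b : L, pow L a n = mul L (pow L a n) b \/
                  mul L (pow L a (n - 1)) b = mul L (pow L a n) b.

Lemma all_strongly_quasi_absorbingP (n : nat) :
  (forall q : L, proper L q -> strongly_quasi_n_absorbing L n q) <->
  pow_mul_dichotomy n.
Proof.
  split.
  - intros Habs a b.
    destruct (classic (mul L (pow L a n) b = one L)) as [Hone | Hproper].
    + left. apply le_antisym; [rewrite Hone; apply one_top | apply mul_le_l].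
    + destruct (Habs _ (conj (one_top L _) Hproper)) as [_ Hq].
      destruct (Hq a b (le_refl _ _)) as [Hle | Hle]; [left | right];
        apply le_antisym; auto using mul_le_l, pow_mul_le_predpow_mul.
  - intros Hdich q Hq. split; [exact Hq |]. intros a b Hab.
    destruct (Hdich a b) as [-> | ->]; auto.
Qed.

Lemma pow_mul_dichotomyP (n : nat) : 1 <= n ->
  pow_mul_dichotomy n <->
  (forall a : nat -> L,
     le L (pow L (bigmeet L a n) n) (bigprod L a (S n)) \/
     le L (mul L (pow L (bigmeet L a n) (n - 1)) (a n)) (bigprod L a (S n))).
Proof.
  intro Hn. split.
  - intros Hdich a.
    assert (Hprod : le L (mul L (pow L (bigmeet L a n) n) (a n)) (bigprod L a (S n))).
    { apply mul_mono; [apply pow_le_bigprod; intros; now apply bigmeet_le |].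
      apply le_refl. }
    destruct (Hdich (bigmeet L a n) (a n)) as [-> | ->]; auto.
  - intros Hfam a b.
    destruct (Hfam (padded a b n)) as [Hle | Hle];
      rewrite bigmeet_padded, bigprod_padded in Hle by exact Hn; [left | right].
    + apply le_antisym; [exact Hle | apply mul_le_l].
    + unfold padded in Hle. rewrite Nat.ltb_irrefl in Hle.
      apply le_antisym; [exact Hle | apply pow_mul_le_predpow_mul].
Qed.

End MultLatticeFacts.

Theorem mainTheorem14 (L : MultLattice) (n : nat) :
  principal_element_lattice L -> 1 <= n ->
  ((forall q : L, proper L q -> strongly_quasi_n_absorbing L n q) <->
   (forall a b : L, pow L a n = mul L (pow L a n) b \/
                    mul L (pow L a (n - 1)) b = mul L (pow L a n) b)) /\
  ((forall a b : L, pow L a n = mul L (pow L a n) b \/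
                    mul L (pow L a (n - 1)) b = mul L (pow L a n) b) <->
   (forall a : nat -> L,
      le L (pow L (bigmeet L a n) n) (bigprod L a (S n)) \/
      le L (mul L (pow L (bigmeet L a n) (n - 1)) (a n)) (bigprod L a (S n)))).
Proof.
  intros _ Hn. split.
  - exact (all_strongly_quasi_absorbingP L n).
  - exact (pow_mul_dichotomyP L n Hn).
Qed.
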